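(* Let $X$ be a Banach space and $\{L(t,\tau):t\geqslant\tau\}\subset\mathcal L(X)$ a linear evolution process having exponential splitting with constant $M\geqslant1$, exponents $\gamma>\rho$ and projections $\{Q(t):t\in\mathbb R\}$, and also having exponential splitting with constant $M_*\geqslant1$, exponents $\gamma_*>\rho_*$ with $\gamma>\gamma_*$, and projections $\{Q_*(t):t\in\mathbb R\}$. Then $\mathrm{Im}(Q_*(t))\subset\mathrm{Im}(Q(t))$ and $\mathrm{Ker}(Q(t))\subset\mathrm{Ker}(Q_*(t))$ for all $t\in\mathbb R$.
   Context: A linear evolution process is a family $\{L(t,\tau):t\geqslant\tau\}\subset\mathcal L(X)$ with $L(t,t)=I$, $L(t,s)L(s,\tau)=L(t,\tau)$ for $t\geqslant s\geqslant\tau$ and $t\mapsto L(t,\tau)u$ continuous. It has exponential splitting with constant $M\geqslant1$, exponents $\gamma>\rho$ and projections $\{Q(t)\}\subset\mathcal L(X)$ if $Q(t)L(t,\tau)=L(t,\tau)Q(\tau)$ for $t\geqslant\tau$, $L(t,\tau):\mathrm{Im}Q(\tau)\to\mathrm{Im}Q(t)$ is an isomorphism (inverse denoted $L(\tau,t)$), $\|L(t,\tau)Q(\tau)\|\leqslant Me^{-\rho(t-\tau)}$ for $t\leqslant\tau$ and $\|L(t,\tau)(I-Q(\tau))\|\leqslant Me^{-\gamma(t-\tau)}$ for $t\geqslant\tau$. *)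

From HB Require Import structures.
From mathcomp Require Import all_boot all_order all_algebra.
From mathcomp Require Import all_classical all_reals all_analysis.
Set Implicit Arguments. Unset Strict Implicit. Unset Printing Implicit Defensive.
Import Order.TTheory GRing.Theory Num.Theory.
Import numFieldNormedType.Exports.
Local Open Scope classical_set_scope.
Local Open Scope ring_scope.

Definition bounded_linear (R : realType) (X : normedModType R) (A : X -> X) :=
  (forall (a : R) (x y : X), A (a *: x + y) = a *: A x + A y) /\ continuous A.

(* Linear evolution process {L(t,tau) : t >= tau} in L(X); L t tau is only
   meaningful for tau <= t. *)
Definition evolution_process (R : realType) (X : normedModType R)
  (L : R -> R -> X -> X) :=
  [/\ (forall t tau, tau <= t -> bounded_linear (L t tau)),
      (forall t, L t t = id),
      (forall t s tau, tau <= s -> s <= t -> L t s \o L s tau = L t tau) &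
      (forall tau (u : X), {within `[tau, +oo[, continuous (fun t => L t tau u)})].

(* For t <= tau, L(t,tau)Q(tau) denotes the inverse of the
   isomorphism L(tau,t) : Im Q(t) -> Im Q(tau) applied to Q(tau) x, i.e. the
   unique y in Im Q(t) with L(tau,t) y = Q(tau) x. *)
Definition exponential_splitting (R : realType) (X : normedModType R)
  (L : R -> R -> X -> X) (M gamma rho : R) (Q : R -> X -> X) :=
  [/\ 1 <= M /\ rho < gamma,
      (forall t, bounded_linear (Q t) /\ Q t \o Q t = Q t),
      (forall t tau, tau <= t -> Q t \o L t tau = L t tau \o Q tau),
      (forall t tau, tau <= t ->
         {in range (Q tau) &, injective (L t tau)} /\
         L t tau @` range (Q tau) = range (Q t)) &
      (forall t tau (x y : X), t <= tau -> range (Q t) y ->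
         L tau t y = Q tau x ->
         `|y| <= M * expR (- rho * (t - tau)) * `|x|) /\
      (forall t tau (x : X), tau <= t ->
         `|L t tau (x - Q tau x)| <= M * expR (- gamma * (t - tau)) * `|x|)].

From HB Require Import structures.
From mathcomp Require Import all_boot all_order all_algebra.
From mathcomp Require Import all_classical all_reals all_analysis.
From mathcomp Require Import ring.
Import Order.TTheory GRing.Theory Num.Theory.
Import numFieldNormedType.Exports.
Local Open Scope classical_set_scope.
Local Open Scope ring_scope.

(* A vector y in Im Qs(t) is reached at time t from some y' in Im Qs(t - s)
   with |y'| <= Ms e^(rhos s) |y|; the Ker Q-component of y is the image of
   that of y', which decays at rate gamma, so it is O(e^(-(gamma - rhos) s))
   for every s > 0, i.e. zero.  Dually, for x in Ker Q(t), the vector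
   L(t + s, t) Qs(t) x decays at rates gamma and gammas, while on Im Qs(t)
   the norm grows backwards at most like e^(rhos s); as both rates exceed
   rhos, Qs(t) x = 0. *)

Section ExponentialDecay.
Context {R : realType}.

Lemma cvgr_expR_decay (C : R) {a : R} : 0 < a ->
  C * expR (- (a * s)) @[s --> +oo] --> 0.
Proof.
move=> a0; rewrite -(mulr0 C); apply: cvgM; first exact: cvg_cst.
exact: cvg_comp (gt0_cvgMry a0 cvg_id) (@cvgr_expR R).
Qed.

Lemma le0_of_le_cvgr0 {n : R} {f : R -> R} :
  f s @[s --> +oo] --> 0 -> (forall s, 0 < s -> n <= f s) -> n <= 0.
Proof.
move=> f0 nf; rewrite -(cvg_lim _ f0) //; apply: limr_ge; first exact: cvgP f0.
by near=> s; apply: nf; near: s; exact: nbhs_pinfty_gt.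
Unshelve. all: by end_near. Qed.

Lemma expR_decay_mul (a b s : R) :
  expR (- (a * s)) * expR (b * s) = expR (- ((a - b) * s)).
Proof. by rewrite -expRD; congr expR; ring. Qed.

End ExponentialDecay.

Lemma bounded_linearB {R : realType} {X : normedModType R} {A : X -> X} :
  bounded_linear A -> forall x y, A (x - y) = A x - A y.
Proof.
by move=> [A_lin _] x y; rewrite addrC -scaleN1r A_lin scaleN1r addrC.
Qed.

Section ExponentialSplitting.
Context {R : realType} {X : normedModType R} {L : R -> R -> X -> X}
  {M gamma rho : R} {Q : R -> X -> X}.
Hypothesis L_linear : forall t tau, tau <= t -> bounded_linear (L t tau).
Hypothesis Q_split : exponential_splitting L M gamma rho Q.

Lemma splitting_exponent_lt : rho < gamma.
Proof. by case: Q_split => -[]. Qed.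

Lemma splitting_constant_ge0 : 0 <= M.
Proof. by case: Q_split => -[M_ge1 _] *; exact: le_trans M_ge1. Qed.

Lemma splitting_range_fixed {t y} : range (Q t) y -> Q t y = y.
Proof.
case: Q_split => _ Q_proj _ _ _ [x _ <-].
by have := congr1 (fun f => f x) (Q_proj t).2.
Qed.

Lemma splitting_commute {t tau} x : tau <= t ->
  Q t (L t tau x) = L t tau (Q tau x).
Proof.
by case: Q_split => _ _ QL _ _ tau_t; have := congr1 (fun f => f x) (QL t tau tau_t).
Qed.

Lemma splitting_range_lift {t tau y} : tau <= t -> range (Q t) y ->
  exists2 y', range (Q tau) y' & L t tau y' = y.
Proof.
case: Q_split => _ _ _ L_iso _ tau_t.
by rewrite -(L_iso t tau tau_t).2 => -[y']; exists y'.
Qed.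

Lemma splitting_range_norm_le {t tau y} : t <= tau -> range (Q t) y ->
  `|y| <= M * expR (rho * (tau - t)) * `|L tau t y|.
Proof.
case: Q_split => _ _ _ _ [back _] t_tau Qy.
rewrite -opprB mulrN -mulNr; apply: back => //.
by rewrite splitting_commute // (splitting_range_fixed Qy).
Qed.

Lemma splitting_complement_decay x {t tau} : tau <= t ->
  `|L t tau (x - Q tau x)| <= M * expR (- (gamma * (t - tau))) * `|x|.
Proof. by case: Q_split => _ _ _ _ [_ fwd] tau_t; rewrite -mulNr; exact: fwd. Qed.

Lemma splitting_kernel_decay {t tau x} : tau <= t -> Q tau x = 0 ->
  `|L t tau x| <= M * expR (- (gamma * (t - tau))) * `|x|.
Proof.
move=> tau_t Qx0; rewrite -[x in L _ _ x]subr0 -Qx0.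
exact: splitting_complement_decay.
Qed.

Lemma splitting_complement_comm {t tau} x : tau <= t ->
  L t tau (x - Q tau x) = L t tau x - Q t (L t tau x).
Proof.
by move=> tau_t; rewrite (bounded_linearB (L_linear _ _ tau_t)) splitting_commute.
Qed.

End ExponentialSplitting.

Section TwoSplittings.
Context {R : realType} {X : normedModType R} {L : R -> R -> X -> X}
  {M gamma rho : R} {Q : R -> X -> X} {Ms gammas rhos : R} {Qs : R -> X -> X}.
Hypothesis L_linear : forall t tau, tau <= t -> bounded_linear (L t tau).
Hypothesis Q_split : exponential_splitting L M gamma rho Q.
Hypothesis Qs_split : exponential_splitting L Ms gammas rhos Qs.
Hypothesis rhos_lt_gamma : rhos < gamma.

Let gamma_rhos_gt0 : 0 < gamma - rhos. Proof. by rewrite subr_gt0. Qed.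

Lemma splitting_range_sub t : range (Qs t) `<=` range (Q t).
Proof.
move=> y Qs_y; exists y => //; apply/eqP.
rewrite -subr_eq0 -normr_eq0 eq_le normr_ge0 andbT -normrN opprB.
apply: (le0_of_le_cvgr0 (cvgr_expR_decay (M * Ms * `|y|) gamma_rhos_gt0)).
move=> s s_gt0; have ts_t : t - s <= t by rewrite gerBl ltW.
have [y' Qs_y' <-] := splitting_range_lift Qs_split ts_t Qs_y.
have y'_le := splitting_range_norm_le Qs_split ts_t Qs_y'.
rewrite subKr in y'_le; rewrite -(splitting_complement_comm L_linear Q_split _ ts_t).
apply: le_trans (splitting_complement_decay Q_split _ ts_t) _; rewrite subKr.
apply: le_trans (ler_wpM2l _ y'_le) _.
  by rewrite mulr_ge0 ?expR_ge0 ?(splitting_constant_ge0 Q_split).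
by rewrite -expR_decay_mul le_eqVlt; apply/predU1l; ring.
Qed.

Lemma splitting_kernel_sub t : [set x | Q t x = 0] `<=` [set x | Qs t x = 0].
Proof.
move=> x /= Qx0; apply/eqP; rewrite -normr_eq0 eq_le normr_ge0 andbT.
have gammas_rhos_gt0 : 0 < gammas - rhos.
  by rewrite subr_gt0 (splitting_exponent_lt Qs_split).
apply: (le0_of_le_cvgr0 (f := fun s => Ms * M * `|x| * expR (- ((gamma - rhos) * s))
                                     + Ms * Ms * `|x| * expR (- ((gammas - rhos) * s)))).
  by rewrite -[0](addr0 0); apply: cvgD; exact: cvgr_expR_decay.
move=> s s_gt0; have t_st : t <= s + t by rewrite lerDr ltW.
have Qs_x_le := splitting_range_norm_le Qs_split t_st (imageT (Qs t) x).
rewrite addrK in Qs_x_le.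
have LQs_x_le : `|L (s + t) t (Qs t x)| <=
    M * expR (- (gamma * s)) * `|x| + Ms * expR (- (gammas * s)) * `|x|.
  rewrite -[Qs t x](subKr x) (bounded_linearB (L_linear _ _ t_st)).
  apply: le_trans (ler_normB _ _) _; apply: lerD.
    by have := splitting_kernel_decay Q_split t_st Qx0; rewrite addrK.
  by have := splitting_complement_decay Qs_split x t_st; rewrite addrK.
apply: le_trans Qs_x_le _; apply: le_trans (ler_wpM2l _ LQs_x_le) _.
  by rewrite mulr_ge0 ?expR_ge0 ?(splitting_constant_ge0 Qs_split).
by rewrite -!expR_decay_mul le_eqVlt; apply/predU1l; ring.
Qed.

End TwoSplittings.

Theorem lemma3p3 (R : realType) (X : completeNormedModType R)
  (L : R -> R -> X -> X) (M gamma rho : R) (Q : R -> X -> X)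
  (Ms gammas rhos : R) (Qs : R -> X -> X) :
  evolution_process L ->
  exponential_splitting L M gamma rho Q ->
  exponential_splitting L Ms gammas rhos Qs ->
  gammas < gamma ->
  forall t : R,
    range (Qs t) `<=` range (Q t) /\
    [set x | Q t x = 0] `<=` [set x | Qs t x = 0].
Proof.
move=> [L_linear _ _ _] Q_split Qs_split gammas_lt_gamma t.
have rhos_lt_gamma : rhos < gamma.
  exact: lt_trans (splitting_exponent_lt Qs_split) gammas_lt_gamma.
split.
- exact: (splitting_range_sub L_linear Q_split Qs_split).
- exact: (splitting_kernel_sub L_linear Q_split Qs_split).
Qed.
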